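(* Let $k\ge 0$ be an integer. Let $G_k$ be the tree with vertex set $\{r,s\}\cup\bigcup_{i=1}^k\{y^{(i)},x^{(i)},w^{(i)},v^{(i)},u^{(i)}\}$ and edge set $\{rs\}\cup\bigcup_{i=1}^k\{sy^{(i)},\,y^{(i)}x^{(i)},\,x^{(i)}w^{(i)},\,w^{(i)}v^{(i)},\,v^{(i)}u^{(i)}\}$ (so $s$ carries a pendant vertex $r$ and $k$ pendant paths on $5$ vertices). Let $H_k$ be obtained from $G_k$ by adding three new vertices $u,v,w$ and edges $uv,vw,ws$. Then $\gamma(G_k)=2k+1$ and $\Gamma(G_k)=5^k+3^k$, while $\gamma(H_k)=2k+2$ and $\Gamma(H_k)=2\cdot 5^k+3^k$.
   Context: For a graph $G$, a set $D\subseteq V(G)$ is dominating if every vertex of $G$ lies in $D$ or has a neighbour in $D$. The domination number $\gamma(G)$ is the minimum size of a dominating set; $\Gamma(G)$ denotes the number of dominating sets of $G$ of size $\gamma(G)$. *)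

From mathcomp Require Import all_boot.
Set Implicit Arguments. Unset Strict Implicit. Unset Printing Implicit Defensive.

Section Dom.
Variables (T : finType) (e : rel T).

Definition dominating (D : {set T}) : bool :=
  [forall x, (x \in D) || [exists y in D, e x y]].

(* domination number: minimum size of a dominating set (setT dominates,
   so the initial value #|T| is harmless) *)
Definition domination_number : nat :=
  \big[minn/#|T|]_(D : {set T} | dominating D) #|D|.

Definition num_min_dominating : nat :=
  #|[set D : {set T} | dominating D & #|D| == domination_number]|.
End Dom.

Definition sym_rel (T : Type) (f : T -> T -> bool) : rel T :=
  fun x y => f x y || f y x.

(* Vertices of G_k: inl 0 = r, inl 1 = s, inr (i, j) with
   j = 0,1,2,3,4 standing for y^(i), x^(i), w^(i), v^(i), u^(i). *)
Definition GV (k : nat) : finType := ('I_2 + ('I_k * 'I_5))%type.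

Definition G_edge0 (k : nat) (a b : GV k) : bool :=
  match a, b with
  | inl p, inl q => (val p == 0) && (val q == 1)
  | inl p, inr (i, j) => (val p == 1) && (val j == 0)
  | inr (i, j), inr (i', j') => (i == i') && (val j' == (val j).+1)
  | _, _ => false
  end.

Arguments G_edge0 : clear implicits.
Definition G_edge (k : nat) : rel (GV k) := sym_rel (G_edge0 k).

(* Vertices of H_k: inl a = vertex a of G_k, inr 0 = u, inr 1 = v, inr 2 = w. *)
Definition HV (k : nat) : finType := (GV k + 'I_3)%type.

Definition H_edge0 (k : nat) (a b : HV k) : bool :=
  match a, b with
  | inl a', inl b' => G_edge0 k a' b'
  | inr p, inr q => val q == (val p).+1
  | inr p, inl (inl q) => (val p == 2) && (val q == 1)
  | _, _ => false
  end.

Arguments H_edge0 : clear implicits.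
Definition H_edge (k : nat) : rel (HV k) := sym_rel (H_edge0 k).
Arguments G_edge : clear implicits.
Arguments H_edge : clear implicits.

(* A dominating set D meets the closed neighbourhood {r, s}
   of r and, on each pendant path y x w v u, the disjoint closed neighbourhoods
   {y, x, w} and {v, u} of x and u; hence gamma(G_k) >= 2k + 1, and a minimum
   dominating set contains exactly one of r, s and exactly two vertices of each
   path. The only interaction between the parts is whether s is in D, which
   decides whether y is already dominated: with s the two path vertices can be
   chosen in 5 ways ({y,v}, {x,v}, {w,v}, {x,u}, {w,u}), with r in only 3
   ({y,v}, {x,v}, {x,u}), independently on each path. In H_k the new path u v w
   needs one more vertex, dominating u: either u or v if s is in D (w is then
   dominated by s), but only v otherwise. *)

From mathcomp Require Import all_boot zify.
Set Implicit Arguments. Unset Strict Implicit. Unset Printing Implicit Defensive.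

Lemma card_count_enum (T : finType) (A : {pred T}) :
  #|A| = count (fun x => x \in A) (enum T).
Proof. by rewrite enumT cardE /enum_mem size_filter. Qed.

Lemma card_sum_mem (T : finType) (A : {set T}) : #|A| = \sum_x (x \in A).
Proof. by rewrite -sum1_card big_mkcond; apply: eq_bigr => x _; case: (x \in A). Qed.

Lemma forallb_enum (T : finType) (P : pred T) : [forall x, P x] = all P (enum T).
Proof.
apply/forallP/allP => [PT x _ | PT x]; first exact: PT.
by apply: PT; rewrite mem_enum.
Qed.

Lemma existsb_enum (T : finType) (P : pred T) : [exists x, P x] = has P (enum T).
Proof.
apply/existsP/hasP => [[x Px] | [x _ Px]]; last by exists x.
by exists x; rewrite ?mem_enum.
Qed.

Lemma sum_pair (A B : finType) (F : A * B -> nat) :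
  \sum_(p : A * B) F p = \sum_a \sum_b F (a, b).
Proof. by rewrite pair_bigA; apply: eq_bigr => -[]. Qed.

Lemma card_set_sum (A B : finType) (D : {set A + B}) :
  #|D| = #|inl @^-1: D| + #|inr @^-1: D|.
Proof.
by rewrite !card_sum_mem big_sumType; congr (_ + _); apply: eq_bigr => x _; rewrite inE.
Qed.

Lemma card_set_pair (A B : finType) (E : {set A * B}) :
  #|E| = \sum_a #|[set b | (a, b) \in E]|.
Proof.
rewrite card_sum_mem sum_pair; apply: eq_bigr => a _.
by rewrite card_sum_mem; apply: eq_bigr => b _; rewrite inE.
Qed.

Lemma leqif_sum_const (I : finType) c (F : I -> nat) :
  (forall i, c <= F i) -> #|I| * c <= \sum_i F i ?= iff [forall i, c == F i].
Proof. by move=> cF; rewrite -sum_nat_const; apply: leqif_sum => i _; apply/leqif_eq/cF. Qed.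

Lemma leq_add_eq m n a b : m <= a -> n <= b -> a + b = m + n -> a = m /\ b = n.
Proof. lia. Qed.

Lemma card_set_sum_fibres (A B : finType) (P : {set A} -> {set B} -> bool) :
  #|[set D : {set A + B} | P (inl @^-1: D) (inr @^-1: D)]| =
  \sum_(X : {set A}) #|[set Y | P X Y]|.
Proof.
pose join (XY : {set A} * {set B}) : {set A + B} :=
  [set x | match x with inl a => a \in XY.1 | inr b => b \in XY.2 end].
have join_bij : bijective join.
  exists (fun D : {set A + B} => (inl @^-1: D, inr @^-1: D)).
    by case=> X Y; congr (_, _); apply/setP => ?; rewrite !inE.
  by move=> D; apply/setP => -[a | b]; rewrite !inE.
rewrite card_sum_mem (reindex join) /=; last exact: onW_bij.
rewrite sum_pair; apply: eq_bigr => X _; rewrite card_sum_mem.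
by apply: eq_bigr => Y _; rewrite !inE; congr (nat_of_bool (P _ _)); apply/setP => ?; rewrite !inE.
Qed.

Lemma bigmin_le (I : finType) (P : pred I) (F : I -> nat) x0 i0 :
  P i0 -> \big[minn/x0]_(i | P i) F i <= F i0.
Proof.
move: (mem_index_enum i0); elim: (index_enum I) => //= j r IHr.
rewrite inE big_cons; case/orP => [/eqP<- -> | i0r Pi0]; first exact: geq_minl.
by case: (P j); [apply: leq_trans (geq_minr _ _) (IHr i0r Pi0) | apply: IHr].
Qed.

Lemma domination_number_eq (T : finType) (e : rel T) m :
  (forall D, dominating e D -> m <= #|D|) ->
  0 < #|[set D | dominating e D & #|D| == m]| -> domination_number e = m.
Proof.
move=> lb /card_gt0P[D0]; rewrite inE => /andP[domD0 /eqP cardD0].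
apply/eqP; rewrite eqn_leq -{1}cardD0 bigmin_le //=.
apply: (big_ind (fun n => m <= n)) => //; first by rewrite -cardD0 max_card.
by move=> x y mx my; rewrite leq_min mx my.
Qed.

Notation o2 n := (@Ordinal 2 n isT).
Notation o3 n := (@Ordinal 3 n isT).
Notation o5 n := (@Ordinal 5 n isT).

Lemma enum_ord2 : enum 'I_2 = [:: o2 0; o2 1].
Proof. by apply: (inj_map val_inj); rewrite val_enum_ord. Qed.
Lemma enum_ord3 : enum 'I_3 = [:: o3 0; o3 1; o3 2].
Proof. by apply: (inj_map val_inj); rewrite val_enum_ord. Qed.
Lemma enum_ord5 : enum 'I_5 = [:: o5 0; o5 1; o5 2; o5 3; o5 4].
Proof. by apply: (inj_map val_inj); rewrite val_enum_ord. Qed.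

Lemma ord2P (p : 'I_2) : (p == o2 0) || (p == o2 1).
Proof. by case: p => -[|[|]]. Qed.

Lemma ord2_neq0 (q : 'I_2) : (o2 0 != q) = (q == o2 1).
Proof. by case: q => -[|[|]]. Qed.

Definition path_adj n (j j' : 'I_n) : bool := (val j' == (val j).+1) || (val j == (val j').+1).

(* [P] dominates the path 0 - 1 - ... - n.-1 sitting inside a larger graph in which
   vertex [a] has one more neighbour; [b] says whether that neighbour is in the set. *)
Definition path_dominated n (a : 'I_n) (b : bool) (P : {set 'I_n}) : bool :=
  [forall j, (j \in P) || [exists j' in P, path_adj j j'] || b && (j == a)].

Lemma path_dominated5 b (P : {set 'I_5}) : path_dominated (o5 0) b P =
  [&& [|| b, o5 0 \in P | o5 1 \in P], [|| o5 0 \in P, o5 1 \in P | o5 2 \in P],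
      [|| o5 1 \in P, o5 2 \in P | o5 3 \in P], [|| o5 2 \in P, o5 3 \in P | o5 4 \in P]
    & (o5 3 \in P) || (o5 4 \in P)].
Proof.
rewrite /path_dominated forallb_enum enum_ord5 /= !existsb_enum enum_ord5 /= /path_adj /=.
by case: b; case: (o5 0 \in P); case: (o5 1 \in P); case: (o5 2 \in P); case: (o5 3 \in P);
  case: (o5 4 \in P).
Qed.

Lemma path_dominated3 b (T : {set 'I_3}) : path_dominated (o3 2) b T =
  [&& (o3 0 \in T) || (o3 1 \in T), [|| o3 0 \in T, o3 1 \in T | o3 2 \in T]
    & [|| o3 1 \in T, o3 2 \in T | b]].
Proof.
rewrite /path_dominated forallb_enum enum_ord3 /= !existsb_enum enum_ord3 /= /path_adj /=.
by case: b; case: (o3 0 \in T); case: (o3 1 \in T); case: (o3 2 \in T).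
Qed.

Lemma card_set_ord5 (P : {set 'I_5}) :
  #|P| = (o5 0 \in P) + (o5 1 \in P) + (o5 2 \in P) + (o5 3 \in P) + (o5 4 \in P).
Proof. by rewrite card_count_enum enum_ord5 /= !addnA addn0. Qed.

Lemma card_set_ord3 (T : {set 'I_3}) : #|T| = (o3 0 \in T) + (o3 1 \in T) + (o3 2 \in T).
Proof. by rewrite card_count_enum enum_ord3 /= !addnA addn0. Qed.

Lemma path_dominated5_card b P : path_dominated (o5 0) b P -> 1 < #|P|.
Proof.
rewrite path_dominated5 card_set_ord5.
by case: b; case: (o5 0 \in P); case: (o5 1 \in P); case: (o5 2 \in P); case: (o5 3 \in P);
  case: (o5 4 \in P).
Qed.

Lemma path_dominated3_card b T : path_dominated (o3 2) b T -> 0 < #|T|.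
Proof.
rewrite path_dominated3 card_set_ord3.
by case: (o3 0 \in T); case: (o3 1 \in T); case: (o3 2 \in T).
Qed.

(* Finsets cannot be enumerated by computation, so subsets of 'I_5 are counted
   through their membership bits. *)
Definition set_of_bits5 (t : bool * bool * bool * bool * bool) : {set 'I_5} :=
  [set j : 'I_5 | nth false [:: t.1.1.1.1; t.1.1.1.2; t.1.1.2; t.1.2; t.2] j].

Lemma set_of_bits5_bij : bijective set_of_bits5.
Proof.
exists (fun P : {set 'I_5} => (o5 0 \in P, o5 1 \in P, o5 2 \in P, o5 3 \in P, o5 4 \in P)).
  by case=> [[[[b0 b1] b2] b3] b4]; rewrite !inE.
move=> P; apply/setP => j; rewrite inE.
by case: j => -[|[|[|[|[|j]]]]] Hj //; rewrite (bool_irrelevance Hj isT).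
Qed.

Definition leg_min (b : bool) : {set {set 'I_5}} :=
  [set P | path_dominated (o5 0) b P & #|P| == 2].

Lemma card_leg_min b : #|leg_min b| = if b then 5 else 3.
Proof.
rewrite -(on_card_preimset (onW_bij (leg_min b) set_of_bits5_bij)).
rewrite -sum1_card big_mkcond /=.
under eq_bigr => t _ do rewrite !inE path_dominated5 card_set_ord5 !inE /=.
by rewrite !sum_pair !big_bool; case: b.
Qed.

Definition tail_min (b : bool) : {set {set 'I_3}} :=
  [set T | path_dominated (o3 2) b T & #|T| == 1].

Lemma card_tail_min b : #|tail_min b| = b.+1.
Proof.
have -> : tail_min b = set1 @: [set t | path_dominated (o3 2) b [set t]].
  apply/setP => T; rewrite !inE; apply/andP/imsetP => [[domT /cards1P[t defT]] | [t + ->]].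
    by exists t; rewrite // inE -defT.
  by rewrite inE cards1.
rewrite card_imset; last exact: set1_inj.
by rewrite card_count_enum enum_ord3 /= !inE !path_dominated3 !inE; case: b.
Qed.

Section Trees.
Variable k : nat.
Local Notation r := (@inl 'I_2 ('I_k * 'I_5) (o2 0)).
Local Notation s := (@inl 'I_2 ('I_k * 'I_5) (o2 1)).

Lemma G_edge_hub (p q : 'I_2) : G_edge k (inl p) (inl q) = (p != q).
Proof. by case: p q => -[|[|p]] Hp [[|[|q]] Hq]. Qed.

Lemma G_edge_hub_leg p i j : G_edge k (inl p) (inr (i, j)) = (p == o2 1) && (j == o5 0).
Proof. by rewrite /G_edge /sym_rel /= orbF. Qed.

Lemma G_edge_leg_hub i j p : G_edge k (inr (i, j)) (inl p) = (p == o2 1) && (j == o5 0).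
Proof. by rewrite /G_edge /sym_rel /=. Qed.

Lemma G_edge_leg i j i' j' : G_edge k (inr (i, j)) (inr (i', j')) = (i == i') && path_adj j j'.
Proof. by rewrite /G_edge /sym_rel /= (eq_sym i') -andb_orr. Qed.

Definition hub (D : {set GV k}) : {set 'I_2} := inl @^-1: D.
Definition leg (D : {set GV k}) (i : 'I_k) : {set 'I_5} := [set j | inr (i, j) \in D].

Lemma card_hub (D : {set GV k}) : #|hub D| = (r \in D) + (s \in D).
Proof. by rewrite card_count_enum enum_ord2 /= !inE addn0. Qed.

Lemma card_G_set (D : {set GV k}) : #|D| = #|hub D| + \sum_i #|leg D i|.
Proof.
rewrite card_set_sum card_set_pair; congr (_ + _); apply: eq_bigr => i _.
by apply: eq_card => j; rewrite !inE.
Qed.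

Lemma dominating_G (D : {set GV k}) : dominating (G_edge k) D =
  ((r \in D) || (s \in D)) && [forall i, path_dominated (o5 0) (s \in D) (leg D i)].
Proof.
apply/forallP/andP => [domD | [rs /forallP domL]].
  split.
    have /orP[-> // | /exists_inP[[q | [i j]] qD]] := domD r.
      by rewrite G_edge_hub ord2_neq0 => /eqP qs; rewrite -qs qD orbT.
    by rewrite G_edge_hub_leg.
  apply/forallP => i; apply/forallP => j; rewrite inE.
  have /orP[-> // | /exists_inP[[q | [i' j']] yD]] := domD (inr (i, j)).
    by rewrite G_edge_leg_hub => /andP[/eqP qs ->]; rewrite -qs yD orbT.
  rewrite G_edge_leg => /andP[/eqP-> adj]; apply/orP; left; apply/orP; right.
  by apply/exists_inP; exists j'; rewrite ?inE.
case=> [p | [i j]].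
  case/orP: (ord2P p) => /eqP->; case/orP: rs => [rD | sD]; rewrite ?rD ?sD //=; apply/orP; right.
  - by apply/exists_inP; exists s; rewrite ?G_edge_hub.
  - by apply/exists_inP; exists r; rewrite ?G_edge_hub.
have := forallP (domL i) j; rewrite inE.
case/orP => [/orP[-> // | /exists_inP[j' jD adj]] | /andP[sD /eqP->]]; apply/orP; right.
  by apply/exists_inP; exists (inr (i, j')); [rewrite inE in jD | rewrite G_edge_leg eqxx].
by apply/exists_inP; exists s; rewrite ?G_edge_leg_hub.
Qed.

Lemma dominating_G_card (D : {set GV k}) :
  dominating (G_edge k) D -> 2 * k + 1 <= #|D|.
Proof.
rewrite dominating_G card_G_set card_hub => /andP[rs /forallP domL].
have [legs _] := leqif_sum_const (fun i => path_dominated5_card (domL i)).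
rewrite addnC; apply: leq_add; last by rewrite card_ord mulnC in legs.
by move: rs; case: (r \in D); case: (s \in D).
Qed.

Definition min_dom_G : {set {set GV k}} :=
  [set D | dominating (G_edge k) D & #|D| == 2 * k + 1].

Lemma min_dom_GE (D : {set GV k}) :
  (D \in min_dom_G) = (#|hub D| == 1) && [forall i, leg D i \in leg_min (s \in D)].
Proof.
rewrite inE; apply/andP/andP => [[domD /eqP cardD] | [/eqP hub1 /forallP minL]].
  move: domD; rewrite dominating_G => /andP[rs /forallP domL].
  have legs := leqif_sum_const (fun i => path_dominated5_card (domL i)).
  have hub_ge : 1 <= #|hub D| by rewrite card_hub; move: rs; case: (r \in D); case: (s \in D).
  move: cardD legs; rewrite card_ord card_G_set => cardD [legs_ge legs_eq].
  have hubE : #|hub D| = 1 by move: legs_ge; rewrite mulnC; lia.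
  split; first by rewrite hubE.
  have /forallP legsE : [forall i, 2 == #|leg D i|] by rewrite -legs_eq; apply/eqP; lia.
  by apply/forallP => i; rewrite inE domL eq_sym legsE.
have legs2 i : #|leg D i| = 2 by have := minL i; rewrite inE => /andP[_ /eqP].
split.
  rewrite dominating_G; apply/andP; split.
    by move: hub1; rewrite card_hub; case: (r \in D); case: (s \in D).
  by apply/forallP => i; have := minL i; rewrite inE => /andP[].
rewrite card_G_set hub1 (eq_bigr (fun _ => 2)) // sum_nat_const card_ord.
by apply/eqP; lia.
Qed.

Definition graft (b : bool) (f : {ffun 'I_k -> {set 'I_5}}) : {set GV k} :=
  [set x | match x with inl p => (p == o2 1) == b | inr (i, j) => j \in f i end].

Lemma leg_graft b f i : leg (graft b f) i = f i.
Proof. by apply/setP => j; rewrite !inE. Qed.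

Lemma in_graft_s b f : (s \in graft b f) = b.
Proof. by rewrite inE. Qed.

Lemma hub_graft b f : #|hub (graft b f)| = 1.
Proof. by rewrite card_hub !inE; case: b. Qed.

Lemma graft_inj b : injective (graft b).
Proof. by move=> f g fg; apply/ffunP => i; rewrite -!(leg_graft b) fg. Qed.

Lemma min_dom_G_graft b :
  [set D in min_dom_G | (s \in D) == b] = graft b @: [set f in ffun_on (leg_min b)].
Proof.
apply/setP => D; rewrite inE min_dom_GE; apply/idP/imsetP.
  case/andP=> /andP[hub1 /forallP minL] /eqP sD.
  exists [ffun i => leg D i].
    by rewrite inE; apply/ffun_onP => i; rewrite ffunE -sD minL.
  apply/setP => -[p | [i j]]; rewrite !inE ?ffunE ?inE //.
  move: hub1; rewrite card_hub -sD.
  by case/orP: (ord2P p) => /eqP->; case: (r \in D); case: (s \in D) => //=.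
case=> f; rewrite inE => /ffun_onP minf ->.
rewrite hub_graft in_graft_s !eqxx andbT.
by apply/forallP => i; rewrite leg_graft minf.
Qed.

Lemma card_min_dom_G_by_s b : #|[set D in min_dom_G | (s \in D) == b]| = #|leg_min b| ^ k.
Proof.
rewrite min_dom_G_graft card_imset; last exact: graft_inj.
by rewrite cardsE card_ffun_on card_ord.
Qed.

Lemma card_min_dom_G_with_s : #|[set D in min_dom_G | s \in D]| = 5 ^ k.
Proof.
have -> : [set D in min_dom_G | s \in D] = [set D in min_dom_G | (s \in D) == true].
  by apply/setP => D; rewrite !inE eqb_id.
by rewrite card_min_dom_G_by_s card_leg_min.
Qed.

Lemma card_min_dom_G : #|min_dom_G| = 5 ^ k + 3 ^ k.
Proof.
rewrite -(cardsID [set D : {set GV k} | s \in D]) -setIdE card_min_dom_G_with_s.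
have -> : min_dom_G :\: [set D : {set GV k} | s \in D] = [set D in min_dom_G | (s \in D) == false].
  by apply/setP => D; rewrite !inE eqbF_neg andbC.
by rewrite card_min_dom_G_by_s card_leg_min.
Qed.

Lemma H_edge_G (x y : GV k) : H_edge k (inl x) (inl y) = G_edge k x y.
Proof. by []. Qed.

Lemma H_edge_G_tail (x : GV k) t : H_edge k (inl x) (inr t) = (x == s) && (t == o3 2).
Proof. by case: x => [[[|[|?]] ?] | []] //; case: t => -[|[|[|?]]]. Qed.

Lemma H_edge_tail_G t (x : GV k) : H_edge k (inr t) (inl x) = (x == s) && (t == o3 2).
Proof. by case: x => [[[|[|?]] ?] | []] //; case: t => -[|[|[|?]]]. Qed.

Lemma H_edge_tail t t' : H_edge k (inr t) (inr t') = path_adj t t'.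
Proof. by []. Qed.

Definition lpart (D : {set HV k}) : {set GV k} := inl @^-1: D.
Definition tail (D : {set HV k}) : {set 'I_3} := inr @^-1: D.

Lemma dominating_H (D : {set HV k}) : dominating (H_edge k) D =
  dominating (G_edge k) (lpart D) && path_dominated (o3 2) (s \in lpart D) (tail D).
Proof.
apply/forallP/andP => [domD | [/forallP domG /forallP domT]].
  have rs : (r \in lpart D) || (s \in lpart D).
    have /orP[rD | /exists_inP[[[q | [i j]] | t] yD]] := domD (inl r); first by rewrite inE rD.
    - by rewrite H_edge_G G_edge_hub ord2_neq0 => /eqP qs; rewrite !inE -qs yD orbT.
    - by rewrite H_edge_G G_edge_hub_leg.
    - by rewrite H_edge_G_tail.
  split.
    apply/forallP => x; have /orP[xD | /exists_inP[[y | t] yD]] := domD (inl x).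
    - by rewrite inE xD.
    - by rewrite H_edge_G => xy; apply/orP; right; apply/exists_inP; exists y; rewrite ?inE.
    rewrite H_edge_G_tail => /andP[/eqP-> _]; case/orP: rs => [rD | ->] //.
    by apply/orP; right; apply/exists_inP; exists r; rewrite ?G_edge_hub.
  apply/forallP => t; have /orP[tD | /exists_inP[[x | t'] yD]] := domD (inr t).
  - by rewrite inE tD.
  - by rewrite H_edge_tail_G => /andP[/eqP xs ->]; rewrite -xs !inE yD orbT.
  rewrite H_edge_tail => adj; apply/orP; left; apply/orP; right.
  by apply/exists_inP; exists t'; rewrite ?inE.
case=> [x | t].
  have /orP[xD | /exists_inP[y yD xy]] := domG x; first by rewrite inE in xD; rewrite xD.
  by apply/orP; right; apply/exists_inP; exists (inl y); rewrite ?inE in yD.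
have /orP[/orP[tD | /exists_inP[t' tD adj]] | /andP[sD /eqP->]] := domT t.
- by rewrite inE in tD; rewrite tD.
- by apply/orP; right; apply/exists_inP; exists (inr t'); rewrite ?inE in tD.
by apply/orP; right; apply/exists_inP; exists (inl s); rewrite ?inE in sD; rewrite ?H_edge_G_tail.
Qed.

Lemma dominating_H_card (D : {set HV k}) :
  dominating (H_edge k) D -> 2 * k + 2 <= #|D|.
Proof.
rewrite dominating_H card_set_sum => /andP[/dominating_G_card domG /path_dominated3_card].
by rewrite -/(lpart D) -/(tail D) (addnA (2 * k) 1 1); apply: leq_add.
Qed.

Definition min_dom_H : {set {set HV k}} :=
  [set D | dominating (H_edge k) D & #|D| == 2 * k + 2].

Lemma min_dom_HE (D : {set HV k}) : (D \in min_dom_H) =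
  (lpart D \in min_dom_G) && (tail D \in tail_min (s \in lpart D)).
Proof.
rewrite [D \in _]inE [lpart D \in _]inE [tail D \in _]inE dominating_H card_set_sum.
rewrite -/(lpart D) -/(tail D).
apply/andP/andP => [[/andP[domG domT] /eqP cardD] | [/andP[-> /eqP cardG] /andP[-> /eqP cardT]]].
  rewrite (addnA (2 * k) 1 1) in cardD.
  have [-> ->] := leq_add_eq (dominating_G_card domG) (path_dominated3_card domT) cardD.
  by rewrite domG domT !eqxx.
by split => //; apply/eqP; rewrite cardG cardT -addnA.
Qed.

Lemma card_min_dom_H : #|min_dom_H| = 2 * 5 ^ k + 3 ^ k.
Proof.
have -> : min_dom_H = [set D | (lpart D \in min_dom_G) && (tail D \in tail_min (s \in lpart D))].
  by apply/setP => D; rewrite [in RHS]inE min_dom_HE.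
rewrite (card_set_sum_fibres (fun X Y => (X \in min_dom_G) && (Y \in tail_min (s \in X)))).
rewrite (bigID (mem min_dom_G)) /= [X in _ + X]big1 ?addn0; last first.
  by move=> X /negbTE XminG; apply: eq_card0 => Y; rewrite inE XminG.
rewrite (eq_bigr (fun X : {set GV k} => 1 + (s \in X))); last first.
  by move=> X XminG; rewrite add1n -card_tail_min; apply: eq_card => Y; rewrite [in LHS]inE XminG.
rewrite big_split /= sum1_card.
have -> : \sum_(X in min_dom_G) (s \in X) = #|[set X in min_dom_G | s \in X]|.
  by rewrite -sum1dep_card big_mkcondr.
by rewrite card_min_dom_G card_min_dom_G_with_s addnAC addnn -mul2n.
Qed.

End Trees.

Theorem mainTheorem4 (k : nat) :
  [/\ domination_number (G_edge k) = 2 * k + 1,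
      num_min_dominating (G_edge k) = 5 ^ k + 3 ^ k,
      domination_number (H_edge k) = 2 * k + 2
    & num_min_dominating (H_edge k) = 2 * 5 ^ k + 3 ^ k].
Proof.
have gammaG : domination_number (G_edge k) = 2 * k + 1.
  apply: domination_number_eq (@dominating_G_card k) _.
  by rewrite -/(min_dom_G k) card_min_dom_G addn_gt0 expn_gt0.
have gammaH : domination_number (H_edge k) = 2 * k + 2.
  apply: domination_number_eq (@dominating_H_card k) _.
  by rewrite -/(min_dom_H k) card_min_dom_H addn_gt0 !expn_gt0 orbT.
rewrite /num_min_dominating gammaG gammaH -/(min_dom_G k) -/(min_dom_H k).
by rewrite card_min_dom_G card_min_dom_H.
Qed.
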